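(* Let $X$ be a pure finite $n$-dimensional simplicial complex. Define $M_{-1}=1$ and, for $0\le k\le n-1$, $M_k=\operatorname{Fill}_k((k+1)M_{k-1}+1)$. Let $0\le k\le n-1$. If $\operatorname{Sys}_j(X)>(j+1)M_{j-1}+1$ for every $0\le j\le k$, then $\operatorname{Crad}_k(X)\le M_k$.
   Context: $X(-1)=\{\emptyset\}$. Over $\mathbb{F}_2$: $C_k(X)$ has basis $X(k)$ (chains identified with subsets, $|A|$ the size), $\partial_k\sigma=\sum_{\tau\subset\sigma,|\tau|=|\sigma|-1}\tau$ (so $\partial_0\{u\}=\emptyset$), $Z_k=\ker\partial_k$, $B_k=\operatorname{Im}\partial_{k+1}$. $\operatorname{Sys}_k(X)=\min\{|A|:A\in Z_k\setminus B_k\}$ ($\infty$ if $Z_k=B_k$). For $B\in B_k$, $\operatorname{Fill}_k(B)=\min\{|A|:A\in C_{k+1},\partial_{k+1}A=B\}$; for $B\in Z_k\setminus B_k$, $\operatorname{Fill}_k(B)=\infty$; $\operatorname{Fill}_k(M)=\max\{\operatorname{Fill}_k(B):B\in Z_k,|B|\le M\}$. Cone function: a $(-1)$-cone function with apex $v$ maps $\emptyset\mapsto\{v\}$; for $k\ge0$ a $k$-cone function with apex $v$ is a linear map $\operatorname{Cone}^v_k:\bigoplus_{j=-1}^kC_j\to\bigoplus_{j=-1}^kC_{j+1}$ (sending $C_j$ into $C_{j+1}$) restricting to a $(k-1)$-cone function with apex $v$ and satisfying $\partial_{k+1}\operatorname{Cone}^v_k(A)=A+\operatorname{Cone}^v_k(\partial_kA)$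 for $A\in C_k$. $\operatorname{Vol}(\operatorname{Cone}^v_k)=\max_{\tau\in X(k)}|\operatorname{Cone}^v_k(\tau)|$; $\operatorname{Crad}_k(X)$ is the minimal volume over all vertices $v$ and all $k$-cone functions with apex $v$ ($\infty$ if none exist). *)

From mathcomp Require Import all_boot.
Set Implicit Arguments. Unset Strict Implicit. Unset Printing Implicit Defensive.

(* ---------- extended naturals: None = +infinity ---------- *)
Definition ole (a b : option nat) : bool :=
  match a, b with
  | _, None => true
  | None, Some _ => false
  | Some x, Some y => x <= y
  end.
Definition olt (a b : option nat) : bool :=
  match a, b with
  | Some x, Some y => x < y
  | Some _, None => true
  | None, _ => false
  end.
Definition oadd (a b : option nat) : option nat :=
  match a, b with Some x, Some y => Some (x + y) | _, _ => None end.
(* m * a for a positive natural m (so m * oo = oo) *)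
Definition omul (m : nat) (a : option nat) : option nat :=
  match a with Some x => Some (m * x) | None => None end.
Definition omax (a b : option nat) : option nat :=
  match a, b with Some x, Some y => Some (maxn x y) | _, _ => None end.
Definition omin (T : finType) (P : pred T) (f : T -> nat) : option nat :=
  if [pick x | P x] is Some x0 then Some (\big[minn/f x0]_(y | P y) f y)
  else None.

Section Complex.
Variable V : finType.
Implicit Types (X : {set {set V}}) (A B : {set {set V}}) (s t : {set V}).

(* finite simplicial complex (containing the empty face, X(-1) = {emptyset}) *)
Definition simplicial_complex X : Prop :=
  set0 \in X /\ forall s t, s \in X -> t \subset s -> t \in X.

Definition pure_dim X (n : nat) : Prop :=
  (forall s, s \in X -> #|s| <= n.+1) /\
  (forall s, s \in X -> exists2 r, r \in X & (s \subset r) && (#|r| == n.+1)).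

Definition Xk X (k : nat) : {set {set V}} := [set s in X | #|s| == k.+1].

(* F_2-linear extension of a map on basis faces; chains are sets of faces *)
Definition lin (f : {set V} -> {set {set V}}) A : {set {set V}} :=
  [set t : {set V} | odd #|[set s in A | t \in f s]|].

Definition bd1 s : {set {set V}} := [set t : {set V} | (t \subset s) && (#|t|.+1 == #|s|)].
Definition bd A : {set {set V}} := lin bd1 A.

Definition chain X k A : bool := A \subset Xk X k.
Definition cycle X k A : bool := chain X k A && (bd A == set0).
Definition bdry X k A : bool :=
  [exists D : {set {set V}}, chain X k.+1 D && (bd D == A)].

Definition Sys X k : option nat :=
  omin (fun A => cycle X k A && ~~ bdry X k A) (fun A => #|A|).

Definition FillB X k B : option nat :=
  omin (fun A => chain X k.+1 A && (bd A == B)) (fun A => #|A|).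

Definition Fill X k (M : option nat) : option nat :=
  \big[omax/Some 0]_(B | cycle X k B && ole (Some #|B|) M) FillB X k B.

(* Mseq X j = M_{j-1}: M_{-1} = 1, M_k = Fill_k((k+1) M_{k-1} + 1) *)
Fixpoint Mseq X (j : nat) : option nat :=
  match j with
  | 0 => Some 1
  | j'.+1 => Fill X j' (oadd (omul j'.+1 (Mseq X j')) (Some 1))
  end.

(* A k-cone function with apex v, represented (as any linear map) by its
   values on the basis faces of dimensions -1..k; its action on chains is
   [lin c]. *)
Definition is_cone X (k : nat) (v : V) (c : {ffun {set V} -> {set {set V}}}) : bool :=
  [&& [set v] \in X,
      c set0 == [set [set v]],
      [forall s : {set V}, (s \in X) && (#|s| <= k.+1) ==>
          (c s \subset [set r in X | #|r| == #|s|.+1])] &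
      [forall s : {set V}, (s \in X) && (0 < #|s| <= k.+1) ==>
          (bd (c s) == ([set s] :\: lin c (bd [set s])) :|: (lin c (bd [set s]) :\: [set s]))]].

Definition Vol X k (c : {ffun {set V} -> {set {set V}}}) : nat :=
  \max_(t in Xk X k) #|c t|.

Definition Crad X k : option nat :=
  omin (fun p : V * {ffun {set V} -> {set {set V}}} =>
          is_cone X k p.1 p.2)
       (fun p => Vol X k p.2).

End Complex.

From Pilot Require Import Defs.
From mathcomp Require Import all_boot.
Set Implicit Arguments. Unset Strict Implicit. Unset Printing Implicit Defensive.

(* The cone function is built skeleton by skeleton.  Suppose C is defined on
   the faces of dimension < j, satisfies the cone equation there and has
   |C(t)| <= M_(dim t).  For a j-face s the chain s + C(ds) is a j-cycle,
   since d(s + C(ds)) = ds + (ds + C(dds)) = 0, and it has at most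
   (j+1) M_(j-1) + 1 faces.  This is below Sys_j, so the cycle is a boundary, and a
   minimal filling of it has at most Fill_j((j+1) M_(j-1) + 1) = M_j faces;
   it is taken as C(s).  The apex is any vertex, the start being
   C(emptyset) = {v}. *)

Section Chains.
Variable V : finType.
Implicit Types (A B : {set {set V}}) (s t u : {set V}) (f g : {set V} -> {set {set V}}).

Definition symdiff A B : {set {set V}} := (A :\: B) :|: (B :\: A).

Lemma in_symdiff A B t : (t \in symdiff A B) = (t \in A) (+) (t \in B).
Proof. by rewrite !inE; case: (t \in A); case: (t \in B). Qed.

Lemma symdiff0 A : symdiff A set0 = A.
Proof. by apply/setP => t; rewrite in_symdiff inE addbF. Qed.

Lemma symdiffxx A : symdiff A A = set0.
Proof. by apply/setP => t; rewrite in_symdiff addbb inE. Qed.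

Lemma card_symdiff A B : #|symdiff A B| <= #|A| + #|B|.
Proof.
rewrite (leq_trans _ (leq_subr #|A :&: B| _)) // -cardsU subset_leq_card //.
by apply/subsetP => t; rewrite in_symdiff inE; case: (t \in A).
Qed.

Lemma in_lin f A t : (t \in lin f A) = odd (\sum_s (s \in A) * (t \in f s)).
Proof.
rewrite inE -sum1dep_card big_mkcond /=.
by congr odd; apply: eq_bigr => s _; rewrite mulnb; case: (_ && _).
Qed.

Lemma odd_sum (I : finType) (F : I -> nat) : odd (\sum_i F i) = odd (\sum_i odd (F i)).
Proof.
apply: (big_ind2 (fun a b => odd a = odd b)) => [//|a b c d Eab Ecd|i _].
  by rewrite !oddD Eab Ecd.
by rewrite oddb.
Qed.

Lemma eq_odd_sum (I : finType) (F G : I -> nat) :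
  (forall i, odd (F i) = odd (G i)) -> odd (\sum_i F i) = odd (\sum_i G i).
Proof. by move=> FG; rewrite odd_sum [RHS]odd_sum; congr odd; apply: eq_bigr => i _; rewrite FG. Qed.

Lemma lin_set0 f : lin f set0 = set0.
Proof. by apply/setP => t; rewrite in_lin big1 ?inE // => s _; rewrite inE. Qed.

Lemma lin_set1 f s : lin f [set s] = f s.
Proof.
apply/setP => t; rewrite in_lin (bigD1 s) //= big1 ?addn0 ?in_set1 ?eqxx ?mul1n ?oddb //.
by move=> u /negbTE; rewrite in_set1 => ->.
Qed.

Lemma lin_id A : lin (fun s => [set s]) A = A.
Proof.
apply/setP => t; rewrite in_lin (bigD1 t) //= big1 ?addn0 ?in_set1 ?eqxx ?muln1 ?oddb //.
by move=> u /negbTE ut; rewrite in_set1 eq_sym ut muln0.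
Qed.

Lemma eq_in_lin f g A : {in A, f =1 g} -> lin f A = lin g A.
Proof.
move=> fg; apply/setP => t; rewrite !in_lin; congr odd; apply: eq_bigr => s _.
by case: (boolP (s \in A)) => // /fg ->.
Qed.

Lemma lin_symdiff f A B : lin f (symdiff A B) = symdiff (lin f A) (lin f B).
Proof.
apply/setP => t; rewrite in_symdiff !in_lin -oddD -big_split /=.
apply: eq_odd_sum => s; rewrite in_symdiff.
by case: (s \in A); case: (s \in B); case: (t \in f s).
Qed.

Lemma lin_symdiff_fun f g A :
  lin (fun s => symdiff (f s) (g s)) A = symdiff (lin f A) (lin g A).
Proof.
apply/setP => t; rewrite in_symdiff !in_lin -oddD -big_split /=.
apply: eq_odd_sum => s; rewrite in_symdiff.
by case: (s \in A); case: (t \in f s); case: (t \in g s).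
Qed.

Lemma lin_comp f g A : lin g (lin f A) = lin (fun s => lin g (f s)) A.
Proof.
apply/setP => t; rewrite !in_lin.
transitivity (odd (\sum_u \sum_s (s \in A) * (u \in f s) * (t \in g u))).
  rewrite odd_sum [RHS]odd_sum; congr odd; apply: eq_bigr => u _.
  by rewrite in_lin -big_distrl /= oddM [in RHS]oddM !oddb.
rewrite exchange_big /=; apply: eq_odd_sum => s.
rewrite -(eq_bigr _ (fun u _ => mulnA _ _ _)) -big_distrr /= oddM oddb.
by rewrite in_lin oddM !oddb.
Qed.

Lemma lin_support f A t : t \in lin f A -> exists2 s, s \in A & t \in f s.
Proof.
rewrite inE => odd_t; have /card_gt0P [s] : 0 < #|[set s in A | t \in f s]|.
  by case: #|_| odd_t.
by rewrite inE => /andP [sA tfs]; exists s.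
Qed.

Lemma card_lin f A : #|lin f A| <= \sum_(s in A) #|f s|.
Proof.
apply: (@leq_trans #|\bigcup_(s in A) f s|).
  apply/subset_leq_card/subsetP => t /lin_support [s sA tfs].
  by apply/bigcupP; exists s.
apply: (big_ind2 (fun (B : {set {set V}}) n => #|B| <= n)) => [|B1 n1 B2 n2 le1 le2|//].
  by rewrite cards0.
by rewrite cardsU (leq_trans (leq_subr _ _)) ?leq_add.
Qed.

Lemma bd1E s : bd1 s = [set s :\ x | x in s].
Proof.
apply/setP => t; rewrite inE; apply/andP/imsetP => [[ts /eqP cts]|[x xs ->]].
  have /card_gt0P [x] : 0 < #|s :\: t| by rewrite cardsD (setIidPr ts) -cts subSnn.
  rewrite inE => /andP [xt xs]; exists x => //; apply/eqP.
  rewrite eqEcard subsetD1 ts xt /=.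
  by move: cts; rewrite (cardsD1 x s) xs => -[->].
by rewrite subD1set (cardsD1 x s) xs.
Qed.

Lemma bd1_set0 : bd1 (set0 : {set V}) = set0.
Proof. by rewrite bd1E imset0. Qed.

Lemma bd1_set1 (x : V) : bd1 [set x] = [set set0].
Proof. by rewrite bd1E imset_set1 setDv. Qed.

Lemma card_bd1 s : #|bd1 s| <= #|s|.
Proof. by rewrite bd1E leq_imset_card. Qed.

Lemma bd1P s t : t \in bd1 s -> t \subset s /\ #|t|.+1 = #|s|.
Proof. by rewrite inE => /andP [? /eqP]. Qed.

Lemma bd_bd1 s : bd (bd1 s) = set0.
Proof.
apply/setP => t; rewrite inE [RHS]inE.
have [/andP [ts /eqP cts] | nts] := boolP ((t \subset s) && (#|t|.+2 == #|s|)); last first.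
  rewrite (_ : [set _ in _ | _] = set0) ?cards0 //; apply/setP => u; rewrite inE in_set0.
  apply/negbTE; apply: contra nts; rewrite !inE => /andP [/andP [us /eqP cus] /andP [tu /eqP ctu]].
  by rewrite (subset_trans tu us) /= -cus -ctu.
suff -> : [set u in bd1 s | t \in bd1 u] = [set s :\ x | x in s :\: t].
  rewrite card_in_imset; first by rewrite cardsD (setIidPr ts) -cts !subSn // subnn.
  move=> x y; rewrite !inE => /andP [_ xs] /andP [_ ys] /setP /(_ x).
  by rewrite !inE eqxx xs /= andbT => /esym /negbFE /eqP.
apply/setP => u; rewrite inE bd1E.
apply/andP/imsetP => [[/imsetP [x xs ->] /bd1P [tsx _]] | [x]].
  by exists x => //; move: tsx; rewrite subsetD1 inE xs andbT => /andP [].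
rewrite inE => /andP [xt xs] ->; split; first exact: imset_f.
rewrite inE subsetD1 ts xt /=.
by move: cts; rewrite (cardsD1 x s) xs => -[->].
Qed.

End Chains.

Lemma bigmin_le (T : finType) (P : pred T) (f : T -> nat) a x :
  P x -> \big[minn/a]_(y | P y) f y <= f x.
Proof.
move=> Px; rewrite -big_filter.
have : x \in [seq y <- index_enum T | P y] by rewrite mem_filter Px mem_index_enum.
elim: [seq y <- index_enum T | P y] => [//|z r IHr].
rewrite in_cons big_cons => /orP [/eqP <-|/IHr]; first exact: geq_minl.
exact: leq_trans (geq_minr _ _).
Qed.

Lemma ole_omin (T : finType) (P : pred T) (f : T -> nat) x :
  P x -> ole (omin P f) (Some (f x)).
Proof. by move=> Px; rewrite /omin; case: pickP => [x0 _|/(_ x)]; [exact: bigmin_le | rewrite Px]. Qed.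

Lemma omin_attained (T : finType) (P : pred T) (f : T -> nat) x :
  P x -> exists2 y, P y & omin P f = Some (f y).
Proof.
move=> Px; rewrite /omin; case: pickP => [x0 Px0|/(_ x)]; last by rewrite Px.
suff [y Py ->] : exists2 y, P y & \big[minn/f x0]_(y | P y) f y = f y by exists y.
apply: (big_ind (fun m => exists2 y, P y & m = f y)) => [|_ _ [y Py ->] [z Pz ->]|y Py].
- by exists x0.
- by rewrite /minn; case: ifP => _; [exists y | exists z].
- by exists y.
Qed.

Lemma le_bigomax (T : finType) (P : pred T) (F : T -> option nat) i :
  P i -> ole (F i) (\big[omax/Some 0]_(j | P j) F j).
Proof.
move=> Pi; rewrite -big_filter.
have : i \in [seq j <- index_enum T | P j] by rewrite mem_filter Pi mem_index_enum.
elim: [seq j <- index_enum T | P j] => [//|z r IHr].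
rewrite in_cons big_cons => /orP [/eqP <-|/IHr].
  by case: (F i) => [a|]; case: (\big[_/_]_(_ <- r | _) _) => [b|] //=; rewrite leq_maxl.
case: (F i) => [a|]; case: (F z) => [b|]; case: (\big[_/_]_(_ <- r | _) _) => [c|] //=.
by move=> le_ac; rewrite (leq_trans le_ac (leq_maxr _ _)).
Qed.

Section Fillings.
Variables (V : finType) (X : {set {set V}}).

Lemma small_cycle_bdry k A N :
  Defs.cycle X k A -> #|A| <= N -> olt (Some N) (Sys X k) -> bdry X k A.
Proof.
move=> cA le_AN; apply: contraTT => nbA.
have := @ole_omin _ (fun B => Defs.cycle X k B && ~~ bdry X k B) (fun B => #|B|) A.
rewrite /Sys cA nbA => /(_ isT); case: (omin _ _) => [m|] //= le_mA.
by rewrite -leqNgt (leq_trans le_mA le_AN).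
Qed.

Lemma exists_optimal_filling k A M :
  Defs.cycle X k A -> bdry X k A -> ole (Some #|A|) M ->
  exists2 D, chain X k.+1 D && (bd D == A) & ole (Some #|D|) (Fill X k M).
Proof.
move=> cA /existsP [D0 fD0] le_AM.
have [D fD FillA] := @omin_attained _ (fun D => chain X k.+1 D && (bd D == A)) (fun D => #|D|) D0 fD0.
exists D => //; rewrite -FillA.
have := @le_bigomax _ (fun B => Defs.cycle X k B && ole (Some #|B|) M) (FillB X k) A.
by rewrite cA le_AM; apply.
Qed.

End Fillings.

Section PartialCone.
Variables (V : finType) (X : {set {set V}}) (v : V).
Hypothesis X_complex : simplicial_complex X.
Implicit Types (s t : {set V}) (c : {ffun {set V} -> {set {set V}}}).

Lemma face_bd1 s t : s \in X -> t \in bd1 s -> t \in X /\ #|t|.+1 = #|s|.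
Proof.
move=> sX /bd1P [ts cts]; split => //.
by case: X_complex => _ down_closed; exact: down_closed sX ts.
Qed.

(* s + C(ds); the cone equation at s reads d C(s) = cone_defect c s. *)
Definition cone_defect c s : {set {set V}} := symdiff [set s] (lin c (bd1 s)).

Record partial_cone (j : nat) c : Prop := PartialCone {
  cone_set0 : c set0 = [set [set v]];
  cone_chain : forall s, s \in X -> #|s| <= j -> chain X #|s| (c s);
  cone_bd : forall s, s \in X -> #|s| <= j -> bd (c s) = cone_defect c s;
  cone_vol : forall s, s \in X -> #|s| <= j -> ole (Some #|c s|) (Mseq X #|s|)
}.

Lemma partial_cone0 : [set v] \in X -> partial_cone 0 [ffun => [set [set v]]].
Proof.
move=> vX; split=> [|s _|s _|s _]; rewrite ?ffunE // leqn0 => /eqP/cards0_eq ->.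
- by rewrite /chain sub1set inE vX cards1 cards0.
- by rewrite /bd lin_set1 bd1_set1 /cone_defect bd1_set0 lin_set0 symdiff0.
- by rewrite cards1 cards0.
Qed.

Lemma cone_defect_cycle j c s :
  partial_cone j c -> s \in X -> #|s| = j.+1 -> Defs.cycle X j (cone_defect c s).
Proof.
case=> _ cchain cbd _ sX cs; apply/andP; split.
  apply/subsetP => u; rewrite in_symdiff in_set1.
  have [-> _|_ /= /lin_support [t ts uct]] := eqVneq u s; first by rewrite /Xk inE sX cs eqxx.
  have [tX cts] := face_bd1 sX ts.
  have ct : #|t| = j by apply: succn_inj; rewrite cts.
  by have := subsetP (cchain t tX (eq_leq ct)) u uct; rewrite ct.
have bd_c : {in bd1 s, (fun t => bd (c t)) =1 cone_defect c}.
  move=> t ts; have [tX cts] := face_bd1 sX ts.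
  by apply: cbd; rewrite // -ltnS cts cs.
rewrite /cone_defect /bd lin_symdiff lin_set1 lin_comp (eq_in_lin bd_c).
by rewrite lin_symdiff_fun lin_id -lin_comp -/(bd _) bd_bd1 lin_set0 symdiff0 symdiffxx.
Qed.

Lemma card_cone_defect j c m s :
  partial_cone j c -> Mseq X j = Some m -> s \in X -> #|s| = j.+1 ->
  #|cone_defect c s| <= j.+1 * m + 1.
Proof.
case=> _ _ _ cvol Mj sX cs.
rewrite (leq_trans (card_symdiff _ _)) // cards1 addnC leq_add2r.
rewrite (leq_trans (card_lin _ _)) // (@leq_trans (\sum_(t in bd1 s) m)) //.
  apply: leq_sum => t ts; have [tX cts] := face_bd1 sX ts.
  have ct : #|t| = j by apply: succn_inj; rewrite cts.
  by have := cvol t tX; rewrite ct Mj; apply.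
by rewrite sum_nat_const leq_mul2r -cs card_bd1 orbT.
Qed.

Lemma partial_cone_extend j c :
  partial_cone j c ->
  (forall s, s \in X -> #|s| = j.+1 -> exists D,
     [&& chain X j.+1 D, bd D == cone_defect c s & ole (Some #|D|) (Mseq X j.+1)]) ->
  exists c', partial_cone j.+1 c'.
Proof.
case=> c0 cchain cbd cvol fill.
pose good s D := [&& chain X j.+1 D, bd D == cone_defect c s & ole (Some #|D|) (Mseq X j.+1)].
pose c' := [ffun s => if (s \in X) && (#|s| == j.+1) then odflt set0 [pick D | good s D] else c s].
have c'_top s : s \in X -> #|s| = j.+1 -> good s (c' s).
  move=> sX cs; rewrite ffunE sX cs eqxx /=; case: pickP => [//|none].
  by have [D gD] := fill s sX cs; move: (none D); rewrite /good gD.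
have c'_low s : #|s| <= j -> c' s = c s.
  by move=> sj; rewrite ffunE; case: ifP => // /andP [_ /eqP cs]; move: sj; rewrite cs ltnn.
have defect_c' s : #|s| <= j.+1 -> cone_defect c' s = cone_defect c s.
  move=> sj; congr symdiff; apply: eq_in_lin => t /bd1P [_ cts].
  by apply: c'_low; rewrite -ltnS cts.
exists c'; split=> [|s sX|s sX|s sX]; first by rewrite c'_low ?cards0.
- rewrite leq_eqVlt ltnS => /predU1P [cs|sj]; last by rewrite c'_low // cchain.
  by case/and3P: (c'_top s sX cs); rewrite cs.
- rewrite leq_eqVlt ltnS => /predU1P [cs|sj]; last by rewrite defect_c' ?c'_low ?cbd // ltnW.
  by case/and3P: (c'_top s sX cs) => _ /eqP -> _; rewrite defect_c' ?cs.
- rewrite leq_eqVlt ltnS => /predU1P [cs|sj]; last by rewrite c'_low // cvol.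
  by case/and3P: (c'_top s sX cs); rewrite cs.
Qed.

Lemma partial_cone_step j c :
  partial_cone j c -> olt (oadd (omul j.+1 (Mseq X j)) (Some 1)) (Sys X j) ->
  exists c', partial_cone j.+1 c'.
Proof.
move=> cc; case Mj: (Mseq X j) => [m|] //= small_Sys.
apply: (partial_cone_extend cc) => s sX cs.
have cyc := cone_defect_cycle cc sX cs.
have small := card_cone_defect cc Mj sX cs.
have [D /andP [Dc bdD] DM] :=
  exists_optimal_filling cyc (small_cycle_bdry cyc small small_Sys) (M := Some (j.+1 * m + 1)) small.
by exists D; rewrite /= Mj Dc bdD.
Qed.

Lemma exists_partial_cone k :
  [set v] \in X ->
  (forall j, j < k -> olt (oadd (omul j.+1 (Mseq X j)) (Some 1)) (Sys X j)) ->
  exists c, partial_cone k c.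
Proof.
move=> vX; elim: k => [_|k IHk small_Sys].
  by exists [ffun => [set [set v]]]; apply: partial_cone0.
have [c cc] := IHk (fun j jk => small_Sys j (leqW jk)).
exact: partial_cone_step cc (small_Sys k (ltnSn k)).
Qed.

Lemma partial_cone_is_cone k c :
  [set v] \in X -> partial_cone k.+1 c -> is_cone X k v c.
Proof.
move=> vX [c0 cchain cbd _]; rewrite /is_cone vX c0 eqxx /=.
apply/andP; split; apply/forallP => s; apply/implyP.
  by case/andP=> sX sk; apply: cchain.
by case/andP=> sX /andP [_ sk]; rewrite /bd lin_set1 -/(bd (c s)) cbd.
Qed.

Lemma Crad_le_partial_cone k c :
  [set v] \in X -> partial_cone k.+1 c -> ole (Crad X k) (Mseq X k.+1).
Proof.
move=> vX cc; case Mk: (Mseq X k.+1) => [M|]; last by case: (Crad X k).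
have := @ole_omin _ (fun p : V * {ffun _} => is_cone X k p.1 p.2) (fun p => Vol X k p.2) (v, c).
rewrite /Crad partial_cone_is_cone //; case: (omin _ _) => [r|] /= /(_ isT) // le_r_Vol.
rewrite (leq_trans le_r_Vol) //.
apply/bigmax_leqP => t; rewrite inE => /andP [tX /eqP ct].
by have := cone_vol cc tX; rewrite ct Mk => /(_ (ltnSn k)).
Qed.

End PartialCone.

Lemma pure_exists_vertex (V : finType) (X : {set {set V}}) n :
  simplicial_complex X -> pure_dim X n -> exists v, [set v] \in X.
Proof.
move=> [X0 down_closed] [_ in_facet].
have [r rX /andP [_ /eqP cr]] := in_facet _ X0.
have /card_gt0P [x xr] : 0 < #|r| by rewrite cr.
by exists x; apply: down_closed rX _; rewrite sub1set.
Qed.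

Theorem proposition4p1 (V : finType) (X : {set {set V}}) (n k : nat) :
  simplicial_complex X -> pure_dim X n ->
  k < n ->
  (forall j, j <= k ->
     olt (oadd (omul j.+1 (Mseq X j)) (Some 1)) (Sys X j)) ->
  ole (Crad X k) (Mseq X k.+1).
Proof.
move=> X_complex X_pure _ small_Sys.
have [v vX] := pure_exists_vertex X_complex X_pure.
have [c cc] := exists_partial_cone X_complex vX (k := k.+1) small_Sys.
exact: Crad_le_partial_cone vX cc.
Qed.
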